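(* Consider the fully discrete implicit variable-step BDF2 scheme described in the context and let $\{u^n\}_{n=0}^N$ be its solution. Suppose the time-step ratios satisfy $r_k\le r_s$ for $2\le k\le N$ and the time steps satisfy \[ \tau_n<4\delta\min\Big\{R_L(r_n,r_{n+1}),\ \frac{2+r_2}{1+r_2}\Big\},\qquad 1\le n\le N, \] where $R_L(z,s)=\frac{2+4z-z^{3/2}}{1+z}-\frac{s^{3/2}}{1+s}$ (with $r_1:=0$). Then \[ E^n\le\mathcal{E}^n\le\mathcal{E}^{n-1}\le E^0,\qquad 1\le n\le N, \] where $E^n=\frac{\delta}{2}\|\Delta_hu^n\|^2+\frac14\big\||\nabla_hu^n|^2-1\big\|^2$ for $n\ge0$, $\mathcal{E}^n=E^n+\frac{r_{n+1}^{3/2}}{2(1+r_{n+1})\tau_n}\|\nabla_\tau u^n\|^2$ for $n\ge1$, and $\mathcal E^0=E^0$.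
   Context: Let $L>0$, $\Omega=(0,L)^2$, $M$ a positive integer, $h=L/M$, $x_i=ih$, $y_j=jh$, $\Omega_h=\{(x_i,y_j):1\le i,j\le M\}$, $\bar\Omega_h=\{(x_i,y_j):0\le i,j\le M\}$, and $\mathbb{V}_h$ the space of grid functions on $\bar\Omega_h$ that are $L$-periodic in each direction. For $v\in\mathbb{V}_h$: $\delta_x v_{i+1/2,j}=(v_{i+1,j}-v_{ij})/h$, $\Delta_x v_{ij}=(v_{i+1,j}-v_{i-1,j})/(2h)$, $\delta_x^2 v_{ij}=(\delta_xv_{i+1/2,j}-\delta_xv_{i-1/2,j})/h$, and analogously in $y$; $\Delta_h=\delta_x^2+\delta_y^2$, $\nabla_h v_{ij}=(\Delta_x v_{ij},\Delta_y v_{ij})^T$, and for a vector grid function $\mathbf{g}=(g_1,g_2)$, $\nabla_h\cdot \mathbf g=\Delta_x g_1+\Delta_y g_2$. Inner product $\langle v,w\rangle=h^2\sum_{\mathrm{x}_h\in\Omega_h}v_hw_h$, $\|v\|=\sqrt{\langle v,v\rangle}$; $|\nabla_hu|$ is the pointwise Euclidean norm. Let $f(\mathbf{v})=(|\mathbf v|^2-1)\mathbf v$ and $\delta>0$. Time levels $0=t_0<t_1<\dots<t_N=T$, $\tau_n=t_n-t_{n-1}$, $r_n=\tau_n/\tau_{n-1}$ ($2\le n\le N$); $r_{N+1}\in(0,r_s]$ is an auxiliary ratio used for $n=N$. $\nabla_\tau v^n=v^n-v^{n-1}$. BDF2 kernels: $b_0^{(1)}=2/\tau_1$, and for $n\ge2$,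 $b_0^{(n)}=\frac{1+2r_n}{\tau_n(1+r_n)}$, $b_1^{(n)}=-\frac{r_n^2}{\tau_n(1+r_n)}$, $b_j^{(n)}=0$ for $j\ge2$; $D_2v^n=\sum_{k=1}^n b_{n-k}^{(n)}\nabla_\tau v^k$. The scheme is: $D_2u_h^n+\delta\Delta_h^2u_h^n-\nabla_h\cdot f(\nabla_hu_h^n)=0$ for $\mathrm{x}_h\in\Omega_h$, $1\le n\le N$, with $u_h^0=\varphi_0(\mathrm{x}_h)-\frac{\tau_1}{2}\varphi_1(\mathrm{x}_h)$, $\varphi_1=\nabla\cdot f(\nabla\varphi_0)-\delta\Delta^2\varphi_0$ for given periodic smooth data $\varphi_0\in H^4(\Omega)$. $r_s$ is a fixed constant with $0<r_s<4.864$. *)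

From mathcomp Require Import all_boot all_order all_algebra.
From mathcomp Require Import reals.
Set Implicit Arguments. Unset Strict Implicit. Unset Printing Implicit Defensive.
Import Order.TTheory GRing.Theory Num.Theory.
Local Open Scope ring_scope.

Section Grid.
Variable R : realType.
Variable M : nat.
Variable h : R.

(* L-periodic grid functions on the M x M periodic grid; the index i : 'I_M
   stands for the residue class of i mod M (so i = 0 represents x_0 = x_M). *)
Definition gridfun := 'I_M -> 'I_M -> R.

Definition sx (i : 'I_M) := ordS i.
Definition px (i : 'I_M) := ord_pred i.

(* forward difference delta_x v_{i+1/2,j} stored at index i *)
Definition dfx (v : gridfun) : gridfun := fun i j => (v (sx i) j - v i j) / h.
Definition dfy (v : gridfun) : gridfun := fun i j => (v i (sx j) - v i j) / h.
Definition dcx (v : gridfun) : gridfun := fun i j => (v (sx i) j - v (px i) j) / (2 * h).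
Definition dcy (v : gridfun) : gridfun := fun i j => (v i (sx j) - v i (px j)) / (2 * h).
Definition d2x (v : gridfun) : gridfun := fun i j => (dfx v i j - dfx v (px i) j) / h.
Definition d2y (v : gridfun) : gridfun := fun i j => (dfy v i j - dfy v i (px j)) / h.
Definition lap (v : gridfun) : gridfun := fun i j => d2x v i j + d2y v i j.
Definition gdiv (g1 g2 : gridfun) : gridfun := fun i j => dcx g1 i j + dcy g2 i j.

Definition fgrad1 (u : gridfun) : gridfun :=
  fun i j => ((dcx u i j) ^+ 2 + (dcy u i j) ^+ 2 - 1) * dcx u i j.
Definition fgrad2 (u : gridfun) : gridfun :=
  fun i j => ((dcx u i j) ^+ 2 + (dcy u i j) ^+ 2 - 1) * dcy u i j.
Definition gradsq1 (u : gridfun) : gridfun :=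
  fun i j => (dcx u i j) ^+ 2 + (dcy u i j) ^+ 2 - 1.

Definition ginner (v w : gridfun) : R := h ^+ 2 * \sum_(i < M) \sum_(j < M) v i j * w i j.
Definition gnorm (v : gridfun) : R := Num.sqrt (ginner v v).

End Grid.

Section Time.
Variable R : realType.

(* z^{3/2} for z >= 0 *)
Definition pow32 (z : R) : R := z * Num.sqrt z.

(* time-step ratios: r_1 := 0, r_n = tau_n / tau_{n-1} for 2 <= n <= N,
   r_{N+1} := rN1 (auxiliary stepratio) *)
Definition stepratio (tau : nat -> R) (N : nat) (rN1 : R) (n : nat) : R :=
  if (n <= 1)%N then 0 else if (n <= N)%N then tau n / tau n.-1 else rN1.

Definition RL (z s : R) : R :=
  (2 + 4 * z - pow32 z) / (1 + z) - pow32 s / (1 + s).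

Definition b0 (tau : nat -> R) (r : nat -> R) (n : nat) : R :=
  if n == 1%N then 2 / tau 1%N else (1 + 2 * r n) / (tau n * (1 + r n)).
Definition b1 (tau : nat -> R) (r : nat -> R) (n : nat) : R :=
  - (r n) ^+ 2 / (tau n * (1 + r n)).

End Time.

Definition D2 (R : realType) (M : nat) (tau r : nat -> R)
    (u : nat -> gridfun R M) (n : nat) : gridfun R M :=
  fun i j =>
    if n == 1%N then b0 tau r 1 * (u 1%N i j - u 0%N i j)
    else b0 tau r n * (u n i j - u n.-1 i j)
         + b1 tau r n * (u n.-1 i j - u n.-2 i j).

Definition Energy (R : realType) (M : nat) (h delta : R) (v : gridfun R M) : R :=
  delta / 2 * (gnorm h (lap h v)) ^+ 2 + 1 / 4 * (gnorm h (gradsq1 h v)) ^+ 2.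

Definition ModEnergy (R : realType) (M : nat) (h delta : R) (tau r : nat -> R)
    (u : nat -> gridfun R M) (n : nat) : R :=
  if n == 0%N then Energy h delta (u 0%N)
  else Energy h delta (u n)
       + pow32 (r n.+1) / (2 * (1 + r n.+1) * tau n)
         * (gnorm h (fun i j => u n i j - u n.-1 i j)) ^+ 2.

(* Test the scheme at level n with the increment v = u^n - u^(n-1) and sum by parts.
   The biharmonic term gives delta/2 (|lap_h u^n|^2 - |lap_h u^(n-1)|^2 + |lap_h v|^2),
   convexity splitting bounds the nonlinear term below by the change of the double-well
   energy minus |grad_h v|^2 / 2, and that loss is absorbed by the surplus
   delta/2 |lap_h v|^2 at the price of |v|^2 / (8 delta).  In the BDF2 term, Young's
   inequality splits the cross product <u^(n-1) - u^(n-2), v> into an r_n^(3/2) part at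
   level n and an r_n^(5/2) part that is exactly the extra term of the modified energy at
   level n-1.  What is left is |v|^2 (tau_n / (4 delta) - R_L(r_n, r_(n+1))) / (2 tau_n),
   which the time-step restriction makes nonpositive. *)

From Pilot Require Import Defs.
From mathcomp Require Import all_boot all_order all_algebra.
From mathcomp Require Import reals ring lra zify.
Set Implicit Arguments. Unset Strict Implicit. Unset Printing Implicit Defensive.
Import Order.TTheory GRing.Theory Num.Theory.
Local Open Scope ring_scope.

Section GridSum.
Variables (R : realType) (M : nat).

Definition gsum (F : gridfun R M) : R := \sum_(i < M) \sum_(j < M) F i j.

Lemma gsumD F G : gsum (fun i j => F i j + G i j) = gsum F + gsum G.
Proof. by rewrite /gsum -big_split; apply: eq_bigr => i _; rewrite big_split. Qed.

Lemma gsumZ c F : gsum (fun i j => c * F i j) = c * gsum F.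
Proof. by rewrite /gsum mulr_sumr; apply: eq_bigr => i _; rewrite mulr_sumr. Qed.

Lemma gsumN F : gsum (fun i j => - F i j) = - gsum F.
Proof. by rewrite /gsum -sumrN; apply: eq_bigr => i _; rewrite sumrN. Qed.

Lemma gsum0 : gsum (fun _ _ => 0) = 0.
Proof. by rewrite /gsum big1 // => i _; rewrite big1. Qed.

Lemma eq_gsum F G : (forall i j, F i j = G i j) -> gsum F = gsum G.
Proof. by move=> FG; apply: eq_bigr => i _; apply: eq_bigr => j _. Qed.

Lemma ler_gsum F G : (forall i j, F i j <= G i j) -> gsum F <= gsum G.
Proof. by move=> FG; apply: ler_sum => i _; apply: ler_sum => j _. Qed.

Lemma gsum_ge0 F : (forall i j, 0 <= F i j) -> 0 <= gsum F.
Proof. by move=> F0; apply: sumr_ge0 => i _; apply: sumr_ge0 => j _. Qed.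

Lemma gsum_tr F : gsum (fun i j => F j i) = gsum F.
Proof. by rewrite /gsum exchange_big. Qed.

Lemma gsum_shift (s : 'I_M -> 'I_M) F : injective s -> gsum (fun i j => F (s i) j) = gsum F.
Proof. by move=> s_inj; rewrite /gsum [RHS](reindex_inj s_inj). Qed.

Lemma sxK (i : 'I_M) : px (sx i) = i. Proof. exact: ordSK. Qed.
Lemma pxK (i : 'I_M) : sx (px i) = i. Proof. exact: ord_predK. Qed.

Lemma ginnerE h v w : ginner h v w = h ^+ 2 * gsum (fun i j => v i j * w i j).
Proof. by []. Qed.

Lemma gnorm_sq h v : Defs.gnorm h v ^+ 2 = h ^+ 2 * gsum (fun i j => v i j ^+ 2).
Proof.
rewrite /Defs.gnorm sqr_sqrtr; first by rewrite ginnerE; under eq_gsum do rewrite -expr2.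
by apply: mulr_ge0; [exact: sqr_ge0 | apply: gsum_ge0 => i j; rewrite -expr2; exact: sqr_ge0].
Qed.

End GridSum.

Section SummationByParts.
Variables (R : realType) (M : nat) (h : R).
Hypothesis h_neq0 : h != 0.
Notation gsum := (@gsum R M).

Lemma gsum_d2xM A B :
  gsum (fun i j => d2x h A i j * B i j) = - gsum (fun i j => dfx h A i j * dfx h B i j).
Proof.
have shift : gsum (fun i j => dfx h A (px i) j * B i j)
           = gsum (fun i j => dfx h A i j * B (sx i) j).
  rewrite -(gsum_shift _ (@ordS_inj M)); apply: eq_gsum => i j; by rewrite sxK.
transitivity (h^-1 * (gsum (fun i j => dfx h A i j * B i j)
                      - gsum (fun i j => dfx h A (px i) j * B i j))).
  by rewrite -gsumN -gsumD -gsumZ; apply: eq_gsum => i j; rewrite /d2x; ring.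
by rewrite shift -gsumN -gsumD -gsumZ -gsumN; apply: eq_gsum => i j; rewrite /dfx; ring.
Qed.

Lemma gsum_d2yM A B :
  gsum (fun i j => d2y h A i j * B i j) = - gsum (fun i j => dfy h A i j * dfy h B i j).
Proof.
rewrite -[LHS]gsum_tr -[in RHS]gsum_tr.
exact: (gsum_d2xM (fun i j => A j i) (fun i j => B j i)).
Qed.

Lemma gsum_lapM A B : gsum (fun i j => lap h A i j * B i j)
  = - gsum (fun i j => dfx h A i j * dfx h B i j + dfy h A i j * dfy h B i j).
Proof.
rewrite gsumD opprD -gsum_d2xM -gsum_d2yM -gsumD.
by apply: eq_gsum => i j; rewrite /lap mulrDl.
Qed.

Lemma gsum_lap_sym A B :
  gsum (fun i j => lap h A i j * B i j) = gsum (fun i j => A i j * lap h B i j).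
Proof.
rewrite gsum_lapM -[in RHS](eq_gsum (fun i j => mulrC _ _)) gsum_lapM.
by congr (- _); apply: eq_gsum => i j; rewrite [dfx h A i j * _]mulrC [dfy h A i j * _]mulrC.
Qed.

Lemma gsum_dcxM g v :
  gsum (fun i j => dcx h g i j * v i j) = - gsum (fun i j => g i j * dcx h v i j).
Proof.
have shiftS : gsum (fun i j => g (sx i) j * v i j) = gsum (fun i j => g i j * v (px i) j).
  rewrite -(gsum_shift _ (@ord_pred_inj M)); apply: eq_gsum => i j; by rewrite pxK.
have shiftP : gsum (fun i j => g (px i) j * v i j) = gsum (fun i j => g i j * v (sx i) j).
  rewrite -(gsum_shift _ (@ordS_inj M)); apply: eq_gsum => i j; by rewrite sxK.
transitivity ((2 * h)^-1 * (gsum (fun i j => g (sx i) j * v i j)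
                            - gsum (fun i j => g (px i) j * v i j))).
  by rewrite -gsumN -gsumD -gsumZ; apply: eq_gsum => i j; rewrite /dcx; ring.
by rewrite shiftS shiftP -gsumN -gsumD -gsumZ -gsumN; apply: eq_gsum => i j; rewrite /dcx; ring.
Qed.

Lemma gsum_dcyM g v :
  gsum (fun i j => dcy h g i j * v i j) = - gsum (fun i j => g i j * dcy h v i j).
Proof.
rewrite -[LHS]gsum_tr -[in RHS]gsum_tr.
exact: (gsum_dcxM (fun i j => g j i) (fun i j => v j i)).
Qed.

Lemma gsum_gdivM g1 g2 v : gsum (fun i j => gdiv h g1 g2 i j * v i j)
  = - gsum (fun i j => g1 i j * dcx h v i j + g2 i j * dcy h v i j).
Proof.
rewrite gsumD opprD -gsum_dcxM -gsum_dcyM -gsumD.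
by apply: eq_gsum => i j; rewrite /gdiv mulrDl.
Qed.

Lemma gsum_dcx_sq_le v :
  gsum (fun i j => dcx h v i j ^+ 2) <= gsum (fun i j => dfx h v i j ^+ 2).
Proof.
have mean i j : dcx h v i j = (dfx h v i j + dfx h v (px i) j) / 2.
  by rewrite /dcx /dfx pxK; field.
apply: (@le_trans _ _ (gsum (fun i j => 2^-1 * dfx h v i j ^+ 2
                                       + 2^-1 * dfx h v (px i) j ^+ 2))).
  apply: ler_gsum => i j; rewrite mean.
  have := sqr_ge0 (dfx h v i j - dfx h v (px i) j); nra.
rewrite gsumD !gsumZ (gsum_shift (fun i j => dfx h v i j ^+ 2) (@ord_pred_inj M)); lra.
Qed.

Lemma gsum_dcy_sq_le v :
  gsum (fun i j => dcy h v i j ^+ 2) <= gsum (fun i j => dfy h v i j ^+ 2).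
Proof.
rewrite -[leLHS]gsum_tr -[leRHS]gsum_tr.
exact: (gsum_dcx_sq_le (fun i j => v j i)).
Qed.

End SummationByParts.

Section PointwiseInequalities.
Variable R : realType.

(* Convexity-splitting estimate for the double well F(a) = (|a|^2 - 1)^2 / 4, whose
   gradient is f(a); the defect is (|b|^2 - |a|^2)^2 / 4 + |a|^2 |a - b|^2 / 2 >= 0. *)
Lemma double_well_lb (a1 a2 b1 b2 : R) :
  4^-1 * (a1 ^+ 2 + a2 ^+ 2 - 1) ^+ 2 - 4^-1 * (b1 ^+ 2 + b2 ^+ 2 - 1) ^+ 2
    - 2^-1 * ((a1 - b1) ^+ 2 + (a2 - b2) ^+ 2)
  <= (a1 ^+ 2 + a2 ^+ 2 - 1) * a1 * (a1 - b1) + (a1 ^+ 2 + a2 ^+ 2 - 1) * a2 * (a2 - b2).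
Proof.
set s := a1 ^+ 2 + a2 ^+ 2; set t := b1 ^+ 2 + b2 ^+ 2.
have defect : (s - 1) * a1 * (a1 - b1) + (s - 1) * a2 * (a2 - b2)
  - (4^-1 * (s - 1) ^+ 2 - 4^-1 * (t - 1) ^+ 2 - 2^-1 * ((a1 - b1) ^+ 2 + (a2 - b2) ^+ 2))
  = 4^-1 * (t - s) ^+ 2 + 2^-1 * s * ((a1 - b1) ^+ 2 + (a2 - b2) ^+ 2).
  by rewrite /s /t; field.
have s_ge0 : 0 <= s by apply: addr_ge0; apply: sqr_ge0.
rewrite -subr_ge0 defect.
have := sqr_ge0 (t - s); have := sqr_ge0 (a1 - b1); have := sqr_ge0 (a2 - b2); nra.
Qed.

Lemma young_neg_mul (delta x y : R) :
  0 < delta -> - (x * y) <= delta * x ^+ 2 + (4 * delta)^-1 * y ^+ 2.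
Proof.
move=> delta_gt0.
have square : delta * (x + y / (2 * delta)) ^+ 2
            = delta * x ^+ 2 + x * y + (4 * delta)^-1 * y ^+ 2 by field; lra.
have : 0 <= delta * (x + y / (2 * delta)) ^+ 2 by apply: mulr_ge0; [lra | exact: sqr_ge0].
rewrite square; lra.
Qed.

Lemma pow32_ge0 (z : R) : 0 <= z -> 0 <= pow32 z.
Proof. by move=> z_ge0; apply: mulr_ge0 => //; exact: sqrtr_ge0. Qed.

Lemma pow32_0 : pow32 (0 : R) = 0.
Proof. by rewrite /pow32 mul0r. Qed.

Lemma bdf2_young (r x y : R) :
  0 <= r -> 2 * r ^+ 2 * (y * x) <= pow32 r * x ^+ 2 + r * pow32 r * y ^+ 2.
Proof.
move=> r_ge0; rewrite /pow32; set q := Num.sqrt r.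
have q_ge0 : 0 <= q by exact: sqrtr_ge0.
have -> : r = q ^+ 2 by rewrite sqr_sqrtr.
rewrite -subr_ge0.
have -> : q ^+ 2 * q * x ^+ 2 + q ^+ 2 * (q ^+ 2 * q) * y ^+ 2 - 2 * (q ^+ 2) ^+ 2 * (y * x)
        = q ^+ 3 * (x - q * y) ^+ 2 by ring.
by apply: mulr_ge0; [exact: exprn_ge0 | exact: sqr_ge0].
Qed.

(* This is where R_L comes from: the left-hand side equals
   X (tau / (4 delta) - R_L(r, s)) / (2 tau). *)
Lemma RL_dissipation (delta tau r s X : R) :
  0 < delta -> 0 < tau -> 0 <= r -> 0 <= s -> 0 <= X -> tau < 4 * delta * RL r s ->
  (8 * delta)^-1 * X - (1 + 2 * r) / (tau * (1 + r)) * X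
    + pow32 r / (2 * (1 + r) * tau) * X + pow32 s / (2 * (1 + s) * tau) * X <= 0.
Proof.
move=> delta_gt0 tau_gt0 r_ge0 s_ge0 X_ge0 tau_lt.
have -> : (8 * delta)^-1 * X - (1 + 2 * r) / (tau * (1 + r)) * X
    + pow32 r / (2 * (1 + r) * tau) * X + pow32 s / (2 * (1 + s) * tau) * X
  = (2 * tau)^-1 * ((4 * delta)^-1 * (tau - 4 * delta * RL r s)) * X.
  by rewrite /RL; field; apply/and4P; split; lra.
apply: mulr_le0_ge0 => //; apply: mulr_ge0_le0; first by rewrite invr_ge0; lra.
by apply: mulr_ge0_le0; [rewrite invr_ge0; lra | lra].
Qed.

End PointwiseInequalities.

Section DiscreteEnergy.
Variables (R : realType) (M : nat) (h delta : R).
Hypotheses (h_neq0 : h != 0) (delta_gt0 : 0 < delta).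
Notation gsum := (@gsum R M).

Lemma gsum_bilapM (w w' : gridfun R M) :
  gsum (fun i j => lap h (lap h w) i j * (w i j - w' i j))
  = 2^-1 * (gsum (fun i j => lap h w i j ^+ 2) - gsum (fun i j => lap h w' i j ^+ 2)
            + gsum (fun i j => lap h (fun k l => w k l - w' k l) i j ^+ 2)).
Proof.
have lapB i j : lap h (fun k l => w k l - w' k l) i j = lap h w i j - lap h w' i j.
  by rewrite /lap /d2x /d2y /dfx /dfy; ring.
rewrite gsum_lap_sym // -gsumN -!gsumD -gsumZ.
by apply: eq_gsum => i j; rewrite lapB; field.
Qed.

Lemma gsum_grad_sq_le (v : gridfun R M) :
  gsum (fun i j => dcx h v i j ^+ 2 + dcy h v i j ^+ 2)
  <= delta * gsum (fun i j => lap h v i j ^+ 2) + (4 * delta)^-1 * gsum (fun i j => v i j ^+ 2).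
Proof.
have forward : gsum (fun i j => dfx h v i j ^+ 2) + gsum (fun i j => dfy h v i j ^+ 2)
             = - gsum (fun i j => lap h v i j * v i j).
  by rewrite gsum_lapM opprK -gsumD; apply: eq_gsum => i j; rewrite !expr2.
rewrite gsumD (le_trans (lerD (gsum_dcx_sq_le h_neq0 v) (gsum_dcy_sq_le h_neq0 v))) //.
rewrite forward -gsumN -!gsumZ -gsumD; apply: ler_gsum => i j.
exact: young_neg_mul.
Qed.

Lemma gsum_gdiv_fgrad_lb (w w' : gridfun R M) :
  4^-1 * gsum (fun i j => gradsq1 h w i j ^+ 2) - 4^-1 * gsum (fun i j => gradsq1 h w' i j ^+ 2)
  - 2^-1 * gsum (fun i j => dcx h (fun k l => w k l - w' k l) i j ^+ 2
                           + dcy h (fun k l => w k l - w' k l) i j ^+ 2)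
  <= - gsum (fun i j => gdiv h (fgrad1 h w) (fgrad2 h w) i j * (w i j - w' i j)).
Proof.
rewrite gsum_gdivM opprK -!gsumZ -!gsumN -!gsumD; apply: ler_gsum => i j.
have -> : dcx h (fun k l => w k l - w' k l) i j = dcx h w i j - dcx h w' i j.
  by rewrite /dcx; ring.
have -> : dcy h (fun k l => w k l - w' k l) i j = dcy h w i j - dcy h w' i j.
  by rewrite /dcy; ring.
exact: double_well_lb.
Qed.

Lemma EnergyE (v : gridfun R M) : Energy h delta v
  = h ^+ 2 * (delta / 2 * gsum (fun i j => lap h v i j ^+ 2)
              + 1 / 4 * gsum (fun i j => gradsq1 h v i j ^+ 2)).
Proof. by rewrite /Energy !gnorm_sq; ring. Qed.

(* The double-well part costs |grad_h (w - w')|^2 / 2, which is absorbed by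
   delta |lap_h (w - w')|^2 / 2 up to |w - w'|^2 / (8 delta). *)
Lemma energy_step (w w' D : gridfun R M) :
  (forall i j, D i j + delta * lap h (lap h w) i j
               - gdiv h (fgrad1 h w) (fgrad2 h w) i j = 0) ->
  ginner h D (fun i j => w i j - w' i j) + Energy h delta w - Energy h delta w'
  <= (8 * delta)^-1 * Defs.gnorm h (fun i j => w i j - w' i j) ^+ 2.
Proof.
move=> scheme; set v := fun i j => w i j - w' i j.
have tested : gsum (fun i j => D i j * v i j)
  + delta * gsum (fun i j => lap h (lap h w) i j * v i j)
  - gsum (fun i j => gdiv h (fgrad1 h w) (fgrad2 h w) i j * v i j) = 0.
  rewrite -gsumZ -gsumN -!gsumD -(gsum0 R M); apply: eq_gsum => i j.
  by rewrite -[0](mul0r (v i j)) -(scheme i j); ring.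
have bilap : delta * gsum (fun i j => lap h (lap h w) i j * v i j)
  = delta / 2 * (gsum (fun i j => lap h w i j ^+ 2) - gsum (fun i j => lap h w' i j ^+ 2)
                 + gsum (fun i j => lap h v i j ^+ 2)).
  by rewrite gsum_bilapM mulrA.
have nonlin := gsum_gdiv_fgrad_lb w w'.
have grad := gsum_grad_sq_le v.
have e8 : (8 * delta)^-1 = 2^-1 * (4 * delta)^-1 by field; rewrite gt_eqF.
rewrite -/v in nonlin.
have core : gsum (fun i j => D i j * v i j)
    + (delta / 2 * gsum (fun i j => lap h w i j ^+ 2)
       + 1 / 4 * gsum (fun i j => gradsq1 h w i j ^+ 2))
    - (delta / 2 * gsum (fun i j => lap h w' i j ^+ 2)
       + 1 / 4 * gsum (fun i j => gradsq1 h w' i j ^+ 2))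
  <= (8 * delta)^-1 * gsum (fun i j => v i j ^+ 2) by rewrite e8; lra.
rewrite ginnerE !EnergyE gnorm_sq; have := sqr_ge0 h; nra.
Qed.

End DiscreteEnergy.

Section BDF2Scheme.
Variables (R : realType) (M N : nat) (h delta : R) (tau r : nat -> R).
Variable u : nat -> gridfun R M.
Hypotheses (h_neq0 : h != 0) (delta_gt0 : 0 < delta).
Hypothesis tau_gt0 : forall n, (1 <= n <= N)%N -> 0 < tau n.
Hypothesis r1 : r 1%N = 0.
Hypothesis r_ratio : forall n, (2 <= n <= N)%N -> r n = tau n / tau n.-1.
Hypothesis rS_ge0 : forall n, (1 <= n <= N)%N -> 0 <= r n.+1.
Hypothesis scheme : forall n, (1 <= n <= N)%N -> forall i j,
  D2 tau r u n i j + delta * lap h (lap h (u n)) i j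
    - gdiv h (fgrad1 h (u n)) (fgrad2 h (u n)) i j = 0.
Hypothesis tau_lt_RL : forall n, (1 <= n <= N)%N -> tau n < 4 * delta * RL (r n) (r n.+1).

Local Notation du n := (fun i j => u n i j - u n.-1 i j).
Local Notation E n := (Energy h delta (u n)).
Local Notation ME n := (ModEnergy h delta tau r u n).

Lemma ginner_bdf2_young (s : R) (v w : gridfun R M) : 0 <= s ->
  2 * s ^+ 2 * ginner h w v
  <= pow32 s * Defs.gnorm h v ^+ 2 + s * pow32 s * Defs.gnorm h w ^+ 2.
Proof.
move=> s_ge0; rewrite ginnerE !gnorm_sq.
have young : gsum (fun i j => 2 * s ^+ 2 * (w i j * v i j))
  <= gsum (fun i j => pow32 s * v i j ^+ 2 + s * pow32 s * w i j ^+ 2).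
  by apply: ler_gsum => i j; exact: bdf2_young.
rewrite gsumD !gsumZ in young; have := sqr_ge0 h; nra.
Qed.

Lemma ginner_D2_1 :
  ginner h (D2 tau r u 1) (du 1%N) = 2 / tau 1%N * Defs.gnorm h (du 1%N) ^+ 2.
Proof.
rewrite ginnerE gnorm_sq mulrCA -[in RHS]gsumZ; congr (_ * _).
by apply: eq_gsum => i j; rewrite /D2 /b0 /= expr2 mulrA.
Qed.

Lemma ginner_D2 n : (2 <= n)%N -> ginner h (D2 tau r u n) (du n)
  = (1 + 2 * r n) / (tau n * (1 + r n)) * Defs.gnorm h (du n) ^+ 2
    - r n ^+ 2 / (tau n * (1 + r n)) * ginner h (du n.-1) (du n).
Proof.
move=> n_ge2; have n_neq1 : (n == 1)%N = false by case: n n_ge2 => [|[|]].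
rewrite !ginnerE gnorm_sq [in RHS]mulrCA [in X in _ - X]mulrCA -mulrBr.
congr (_ * _); rewrite -!gsumZ -gsumN -gsumD; apply: eq_gsum => i j.
by rewrite /D2 /b0 /b1 n_neq1; ring.
Qed.

Lemma r_ge0 n : (1 <= n <= N)%N -> 0 <= r n.
Proof.
case: n => [|[|n]] //= => [_ | n_le]; first by rewrite r1.
by rewrite r_ratio // divr_ge0 // ltW // tau_gt0 //=; lia.
Qed.

Lemma ModEnergyS n : (1 <= n)%N ->
  ME n = E n + pow32 (r n.+1) / (2 * (1 + r n.+1) * tau n) * Defs.gnorm h (du n) ^+ 2.
Proof. by case: n. Qed.

Lemma Energy_le_ModEnergy n : (1 <= n <= N)%N -> E n <= ME n.
Proof.
move=> n_range; rewrite ModEnergyS; last by case/andP: n_range.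
rewrite lerDl; apply: mulr_ge0; last exact: sqr_ge0.
have r_ge0' := rS_ge0 n_range; have tau_n := tau_gt0 n_range.
by apply: divr_ge0; [exact: pow32_ge0 | apply: mulr_ge0; lra].
Qed.

(* The r^(5/2) part of the Young bound is the extra term of the previous
   modified energy, because r_n / tau_n = 1 / tau_(n-1). *)
Lemma ginner_D2_lb n : (1 <= n <= N)%N ->
  (1 + 2 * r n) / (tau n * (1 + r n)) * Defs.gnorm h (du n) ^+ 2
    - pow32 (r n) / (2 * (1 + r n) * tau n) * Defs.gnorm h (du n) ^+ 2
    - (ME n.-1 - E n.-1)
  <= ginner h (D2 tau r u n) (du n).
Proof.
move=> n_range; have tau_n := tau_gt0 n_range.
set X := Defs.gnorm h (du n) ^+ 2; have X_ge0 : 0 <= X by exact: sqr_ge0.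
case: n => [|[|m]] in n_range tau_n X X_ge0 *; first by [].
  rewrite ginner_D2_1 -/X r1 pow32_0 /= subrr !mul0r !subr0 mulr0 addr0 mulr1 div1r.
  by have := invr_gt0 (tau 1%N); rewrite tau_n; nra.
rewrite ginner_D2 // -/X; set n := m.+2 in n_range tau_n X X_ge0 *.
have tau_p : 0 < tau n.-1 by apply: tau_gt0; rewrite /=; lia.
have r_n : r n = tau n / tau n.-1 by apply: r_ratio; rewrite /n; lia.
have r_ge0n : 0 <= r n by rewrite r_n divr_ge0 // ltW.
set Y := Defs.gnorm h (du n.-1) ^+ 2; set Z := ginner h (du n.-1) (du n).
have -> : ME n.-1 - E n.-1 = pow32 (r n) / (2 * (1 + r n) * tau n.-1) * Y.
  by rewrite ModEnergyS // addrAC subrr add0r.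
have young := ginner_bdf2_young (du n) (du n.-1) r_ge0n; rewrite -/X -/Y -/Z in young.
set k := (2 * tau n * (1 + r n))^-1.
have k_ge0 : 0 <= k by rewrite invr_ge0; nra.
have := ler_wpM2l k_ge0 young.
have -> : k * (2 * r n ^+ 2 * Z) = r n ^+ 2 / (tau n * (1 + r n)) * Z.
  by rewrite /k; field; apply/andP; split; lra.
have -> : k * (pow32 (r n) * X + r n * pow32 (r n) * Y)
  = pow32 (r n) / (2 * (1 + r n) * tau n) * X + pow32 (r n) / (2 * (1 + r n) * tau n.-1) * Y.
  rewrite /k; set p := pow32 (r n); rewrite r_n; field.
  by apply/and3P; split; rewrite gt_eqF //; lra.
lra.
Qed.

Lemma ModEnergy_decay n : (1 <= n <= N)%N -> ME n <= ME n.-1.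
Proof.
move=> n_range; have n_gt0 : (0 < n)%N by case/andP: n_range.
set X := Defs.gnorm h (du n) ^+ 2; have X_ge0 : 0 <= X by exact: sqr_ge0.
have step := energy_step h_neq0 delta_gt0 (u n.-1) (scheme n_range).
have lower := ginner_D2_lb n_range.
have dissip := RL_dissipation delta_gt0 (tau_gt0 n_range) (r_ge0 n_range) (rS_ge0 n_range)
                 X_ge0 (tau_lt_RL n_range).
rewrite ModEnergyS // -/X; rewrite -/X in step lower.
(* Name the energies as atoms, so that lra does not unfold their definitions. *)
move: step lower dissip; set a := ginner _ _ _; set en := E n; set en1 := E n.-1.
set men1 := ME n.-1; lra.
Qed.

Lemma ModEnergy_le_Energy0 n : (n <= N)%N -> ME n <= E 0%N.
Proof.
elim: n => [|n IHn] n_le; first exact: lexx.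
have decay : ME n.+1 <= ME n by apply: ModEnergy_decay; lia.
by apply: le_trans decay (IHn _); lia.
Qed.

End BDF2Scheme.

Section StepRatio.
Variables (R : realType) (tau : nat -> R) (N : nat) (rN1 : R).

Lemma stepratio_ratio n : (2 <= n <= N)%N -> stepratio tau N rN1 n = tau n / tau n.-1.
Proof. by case/andP; rewrite /stepratio; case: n => [|[|n]] //= _ ->. Qed.

Lemma stepratio_ge0 n : (forall k, (1 <= k <= N)%N -> 0 < tau k) -> 0 <= rN1 ->
  0 <= stepratio tau N rN1 n.
Proof.
move=> tau_gt0.
rewrite /stepratio; case: ifPn => // n_gt1; case: ifPn => // n_le _.
by rewrite divr_ge0 // ltW // tau_gt0; lia.
Qed.

End StepRatio.

Theorem theorem2p2 (R : realType) (L delta rs : R) (M N : nat)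
    (tau : nat -> R) (rN1 : R) (u : nat -> 'I_M -> 'I_M -> R) :
  0 < L -> (0 < M)%N -> 0 < delta ->
  0 < rs -> rs < 4864 / 1000 ->
  (forall n, (1 <= n <= N)%N -> 0 < tau n) ->
  0 < rN1 -> rN1 <= rs ->
  let h := L / M%:R in
  let r := stepratio tau N rN1 in
  (* the fully discrete variable-step BDF2 scheme *)
  (forall n, (1 <= n <= N)%N -> forall i j : 'I_M,
     D2 tau r u n i j + delta * lap h (lap h (u n)) i j
       - gdiv h (fgrad1 h (u n)) (fgrad2 h (u n)) i j = 0) ->
  (* step-stepratio restriction *)
  (forall k, (2 <= k <= N)%N -> r k <= rs) ->
  (* time-step restriction *)
  (forall n, (1 <= n <= N)%N ->
     tau n < 4 * delta * Num.min (RL (r n) (r n.+1)) ((2 + r 2%N) / (1 + r 2%N))) ->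
  forall n, (1 <= n <= N)%N ->
    Energy h delta (u n) <= ModEnergy h delta tau r u n /\
    ModEnergy h delta tau r u n <= ModEnergy h delta tau r u n.-1 /\
    ModEnergy h delta tau r u n.-1 <= Energy h delta (u 0%N).
Proof.
move=> L_gt0 M_gt0 delta_gt0 _ _ tau_gt0 rN1_gt0 _ h r scheme _ tau_lt n n_range.
have h_neq0 : h != 0 by rewrite gt_eqF // divr_gt0 // ltr0n.
have r_nonneg k : 0 <= r k by apply: stepratio_ge0 => //; exact: ltW.
have tau_lt_RL k : (1 <= k <= N)%N -> tau k < 4 * delta * RL (r k) (r k.+1).
  move=> k_range; apply: (lt_le_trans (tau_lt k k_range)).
  by rewrite ler_wpM2l ?ge_min ?lexx //; lra.
have r_ratio k : (2 <= k <= N)%N -> r k = tau k / tau k.-1 by exact: stepratio_ratio.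
have rS_ge0 k : (1 <= k <= N)%N -> 0 <= r k.+1 by move=> _; exact: r_nonneg.
have decay :=
  ModEnergy_decay h_neq0 delta_gt0 tau_gt0 (erefl _) r_ratio rS_ge0 scheme tau_lt_RL.
have bounded :=
  ModEnergy_le_Energy0 h_neq0 delta_gt0 tau_gt0 (erefl _) r_ratio rS_ge0 scheme tau_lt_RL.
have le_n := Energy_le_ModEnergy h delta u tau_gt0 rS_ge0 n_range.
by split; [exact: le_n | split; [exact: decay | apply: bounded; lia]].
Qed.
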